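(* For any real number field $K$ and any $a,b\in K$ with $a>0$ and $b\neq 0$, there exist $x,y,z,u,v,w\in K$ satisfying $$x^2 - ay^2 + au^2 - bv^2 + abw^2 = 0,\qquad z^2 - 4 = au^2,\qquad \mathbb{Q}\left(x,\tfrac{y}{u},z\right) = K,$$ and $$u\neq 0,\quad x + \frac{yz}{2u} > 2,\quad \frac{y}{u}>1,\quad z>2,\quad abw^2 - bv^2 > 4.$$
   Context: A real number field is a field $K\subset\mathbb{R}$ with $[K:\mathbb{Q}]<\infty$. *)

From HB Require Import structures.
From mathcomp Require Import all_boot all_order all_algebra.
From mathcomp Require Import reals.
Set Implicit Arguments. Unset Strict Implicit. Unset Printing Implicit Defensive.
Import Order.TTheory GRing.Theory Num.Theory.
Local Open Scope ring_scope.

Definition is_subfield (R : realType) (K : R -> Prop) : Prop :=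
  K 0 /\ K 1 /\
  (forall x y, K x -> K y -> K (x + y)) /\
  (forall x, K x -> K (- x)) /\
  (forall x y, K x -> K y -> K (x * y)) /\
  (forall x, K x -> x != 0 -> K x^-1).

Definition finite_over_Q (R : realType) (K : R -> Prop) : Prop :=
  exists s : seq R, (forall e, e \in s -> K e) /\
    forall x, K x -> exists c : 'I_(size s) -> rat,
      x = \sum_(i < size s) ratr (c i) * s`_i.

Definition real_number_field (R : realType) (K : R -> Prop) : Prop :=
  is_subfield K /\ finite_over_Q K.

Definition gen_field (R : realType) (S : seq R) : R -> Prop :=
  fun t => forall F : R -> Prop, is_subfield F -> (forall e, e \in S -> F e) -> F t.

(* Write theta for a primitive element of K and take t = (theta + n) / N with
   0 < a t^2 < 1.  With tau = a t^2, the numbers z = 2 (1 + tau) / (1 - tau)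
   and u = 4 t / (1 - tau) satisfy z^2 - 4 = a u^2.  Pick beta, gamma in K with
   c = b beta^2 - a b gamma^2 in (0, 1) and a rational alpha making
   eps = 1 - a alpha^2 - c positive but smaller than 1/2 and c a u^2; then
   x = 2 a alpha u / eps, y = (2 - eps) u / eps, v = 2 a gamma u / eps and
   w = 2 beta u / eps solve the quadric and satisfy the inequalities.
   Conversely y / u = (2 - eps) / eps gives eps, z gives tau, x gives a u and
   hence a t, so Q(x, y/u, z) contains t = tau / (a t) and therefore theta. *)

From HB Require Import structures.
From mathcomp Require Import all_boot all_order all_algebra all_field.
From mathcomp Require Import reals ring lra.
Set Implicit Arguments. Unset Strict Implicit.
Import Order.TTheory GRing.Theory Num.Theory.
Local Open Scope ring_scope.

Section Subfield.
Variables (R : realType) (F : R -> Prop).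
Hypothesis hF : is_subfield F.

Lemma subfield0 : F 0. Proof. by case: hF. Qed.

Lemma subfield1 : F 1. Proof. by case: hF => _ [F1 _]. Qed.

Lemma subfieldD x y : F x -> F y -> F (x + y).
Proof. by case: hF => _ [_ [FD _]]; apply: FD. Qed.

Lemma subfieldN x : F x -> F (- x).
Proof. by case: hF => _ [_ [_ [FN _]]]; apply: FN. Qed.

Lemma subfieldM x y : F x -> F y -> F (x * y).
Proof. by case: hF => _ [_ [_ [_ [FM _]]]]; apply: FM. Qed.

Lemma subfieldV x : F x -> F x^-1.
Proof.
have [->|x_neq0] := eqVneq x 0; first by rewrite invr0.
by case: hF => _ [_ [_ [_ [_ HV]]]] Fx; apply: HV.
Qed.

Lemma subfield_div x y : F x -> F y -> F (x / y).
Proof. by move=> Fx Fy; apply/subfieldM/subfieldV. Qed.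

Lemma subfieldX x n : F x -> F (x ^+ n).
Proof.
move=> Fx; elim: n => [|n IHn]; first by rewrite expr0; apply: subfield1.
by rewrite exprS; apply: subfieldM.
Qed.

Lemma subfield_nat n : F n%:R.
Proof.
elim: n => [|n IHn]; first exact: subfield0.
by rewrite -addn1 natrD; apply: subfieldD => //; apply: subfield1.
Qed.

Lemma subfield_int (m : int) : F m%:~R.
Proof.
by case: m => n; rewrite ?NegzE ?mulrNz; [|apply: subfieldN]; apply: subfield_nat.
Qed.

Lemma subfield_rat (q : rat) : F (ratr q).
Proof. exact/subfield_div/subfield_int/subfield_int. Qed.

Lemma subfield_sum (I : Type) (r : seq I) (P : pred I) (f : I -> R) :
  (forall i, P i -> F (f i)) -> F (\sum_(i <- r | P i) f i).
Proof. by move=> Ff; apply: big_ind => //; [apply: subfield0 | apply: subfieldD]. Qed.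

Lemma subfield_horner (p : {poly rat}) x : F x -> F (map_poly ratr p).[x].
Proof.
move=> Fx; rewrite horner_coef; apply: subfield_sum => i _.
by rewrite coef_map; apply: subfieldM; [apply: subfield_rat | apply: subfieldX].
Qed.

End Subfield.

Ltac subfield_closure hF := repeat first [ assumption
  | apply: (subfield_nat hF) | apply: (subfield_rat hF)
  | apply: (subfield1 hF) | apply: (subfield0 hF)
  | apply: (subfieldD hF) | apply: (subfieldN hF) | apply: (subfieldM hF)
  | apply: (subfieldV hF) | apply: (subfieldX hF) ].

Lemma gen_field_trans (R : realType) (S T : seq R) s :
  (forall e, e \in T -> gen_field S e) -> gen_field T s -> gen_field S s.
Proof. by move=> ST gT F hF FS; apply: gT => // e /ST; apply. Qed.

Lemma number_field_algebraic (R : realType) (K : R -> Prop) e :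
  real_number_field K -> K e ->
  exists2 p : {poly rat}, p != 0 & root (map_poly ratr p) e.
Proof.
(* The m + 1 powers of e lie in the Q-span of the m elements of s, so a nonzero
   vector r in the left kernel of their coordinate matrix A gives a relation. *)
case=> hK [s [_ spanK]] Ke; set m := size s.
have [C HC] := boolp.choice (fun k : 'I_m.+1 => spanK _ (subfieldX hK k Ke)).
pose A : 'M[rat]_(m.+1, m) := \matrix_(k, i) C k i.
have A_dep : ~~ row_free A.
  by rewrite /row_free eqn_leq [(m.+1 <= _)%N]leqNgt ltnS rank_leq_col andbF.
pose r := nz_row (kermx A).
have r_neq0 : r != 0 by rewrite nz_row_eq0 kermx_eq0.
have rA : r *m A = 0 by apply/sub_kermxP; apply: nz_row_sub.
exists (rVpoly r); first by rewrite raddf_eq0 //; apply: can_inj rVpolyK.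
rewrite /root (@horner_coef_wide _ m.+1); last by rewrite size_map_poly size_poly.
under eq_bigr => k _ do rewrite coef_map coef_rVpoly_ord HC mulr_sumr.
rewrite exchange_big big1 //= => i _.
under eq_bigr => k _ do rewrite mulrA -rmorphM.
rewrite -mulr_suml -rmorph_sum.
have := congr1 (fun M : 'M[rat]_(1, m) => M 0 i) rA; rewrite !mxE.
under [X in X = _ -> _]eq_bigr => k _ do rewrite mxE.
by move=> ->; rewrite rmorph0 mul0r.
Qed.

Lemma number_field_primitive_seq (R : realType) (K : R -> Prop) (l : seq R) :
  real_number_field K -> (forall e, e \in l -> K e) ->
  exists2 th, K th & forall e, e \in l -> gen_field [:: th] e.
Proof.
move=> hK; have hS := hK.1; elim: l => [|e l IHl] Kel.
  by exists 0 => //; apply: subfield0.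
have [th Kth gen_th] : exists2 th, K th & forall e, e \in l -> gen_field [:: th] e.
  by apply: IHl => e' le'; apply: Kel; rewrite inE le' orbT.
have Ke : K e := Kel e (mem_head _ _).
have [p p_neq0 p_th] := number_field_algebraic hK Kth.
have [q q_neq0 q_e] := number_field_algebraic hK Ke.
have [n [[p' Dth] [q' De]]] := pchar0_PET p_neq0 p_th q_neq0 q_e (pchar_num _).
set z := e *+ n - th in Dth De *.
exists z; first by rewrite /z -mulr_natr; subfield_closure hS.
have gen_z (s : {poly rat}) : gen_field [:: z] (map_poly ratr s).[z].
  by move=> F hF /(_ _ (mem_head _ _)); apply: subfield_horner.
move=> e'; rewrite inE => /predU1P[-> | le']; first by rewrite -De; apply: gen_z.
apply: gen_field_trans (gen_th _ le') => _ /[!inE] /eqP->.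
by rewrite -Dth; apply: gen_z.
Qed.

Lemma number_field_primitive_element (R : realType) (K : R -> Prop) :
  real_number_field K -> exists2 th, K th & forall s, K s -> gen_field [:: th] s.
Proof.
move=> hK; have [s [Ks spanK]] := hK.2.
have [th Kth gen_th] := number_field_primitive_seq hK Ks.
exists th => // x /spanK[c ->] F hF Fth.
apply: subfield_sum => // i _; apply: subfieldM => //; first exact: subfield_rat.
by apply: (gen_th _ (mem_nth 0 (ltn_ord i))).
Qed.

Lemma scaled_generator (R : realType) (K : R -> Prop) (a th : R) :
  is_subfield K -> K th -> 0 < a ->
  exists t, [/\ K t, 0 < t, a * t ^+ 2 < 1 & gen_field [:: t] th].
Proof.
move=> hK Kth a_gt0; set n := Num.bound `|th|; set w := th + n%:R.
have w_gt0 : 0 < w.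
  have := archi_boundP (normr_ge0 th); have := ler_norm (- th).
  rewrite normrN /w -/n; lra.
set B := Num.bound (a * w ^+ 2); set N : R := B.+1%:R.
have bound_B : a * w ^+ 2 < B%:R.
  exact: archi_boundP (ltW (mulr_gt0 a_gt0 (exprn_gt0 2 w_gt0))).
have N_ge1 : 1 <= N by rewrite /N ler1n.
have N_neq0 : N != 0 by rewrite /N pnatr_eq0.
exists (w / N); split.
- by rewrite /w; subfield_closure hK.
- by rewrite divr_gt0 // (lt_le_trans ltr01).
- have -> : a * (w / N) ^+ 2 = a * w ^+ 2 / N ^+ 2 by field.
  rewrite ltr_pdivrMr ?exprn_gt0 ?(lt_le_trans ltr01) // mul1r.
  have : B%:R + 1 = N by rewrite /N -natr1.
  nra.
- move=> F hF /(_ _ (mem_head _ _)) Ft.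
  have -> : th = w / N * N - n%:R by rewrite /w; field.
  by subfield_closure hF.
Qed.

Lemma inv_succ_sqr_between_0_1 (R : realFieldType) (e : R) :
  0 < e -> 0 < e * (e + 1)^-1 ^+ 2 < 1.
Proof.
move=> e_gt0; rewrite exprVn mulr_gt0 ?invr_gt0 ?exprn_gt0 ?addr_gt0 //=.
rewrite -/(e / _) ltr_pdivrMr ?exprn_gt0 ?addr_gt0 // mul1r; nra.
Qed.

Lemma norm_form_between_0_1 (R : realType) (K : R -> Prop) (a b : R) :
  is_subfield K -> K a -> K b -> 0 < a -> b != 0 ->
  exists be ga, [/\ K be, K ga, 0 < b * be ^+ 2 - a * b * ga ^+ 2
                                 & b * be ^+ 2 - a * b * ga ^+ 2 < 1].
Proof.
move=> hK Ka Kb a_gt0 b_neq0; have [b_gt0 | b_le0] := ltP 0 b.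
  exists (b + 1)^-1, 0; rewrite expr0n mulr0 subr0.
  have /andP[lo hi] := inv_succ_sqr_between_0_1 b_gt0.
  by split => //; subfield_closure hK.
have ab_gt0 : 0 < - (a * b) by rewrite oppr_gt0 pmulr_rlt0 // lt_neqAle b_neq0.
exists 0, (- (a * b) + 1)^-1; rewrite expr0n mulr0 sub0r.
have /andP[lo hi] := inv_succ_sqr_between_0_1 ab_gt0; rewrite mulNr in lo hi.
by split => //; subfield_closure hK.
Qed.

Lemma rat_sqr_between (R : realType) (a l r : R) :
  0 < a -> 0 < r -> l < r ->
  exists q : rat, 0 < ratr q :> R /\ l < a * ratr q ^+ 2 < r.
Proof.
move=> a_gt0 r_gt0 lr.
have ra_gt0 : 0 < r / a by rewrite divr_gt0.
have : Num.sqrt (l / a) < Num.sqrt (r / a) by rewrite ltr_sqrt // ltr_pM2r ?invr_gt0.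
move=> /rat_in_itvoo[q]; rewrite in_itv /= => /andP[lq qr].
have q_gt0 : 0 < ratr q :> R := le_lt_trans (sqrtr_ge0 _) lq.
exists q; split => //; apply/andP; split; last first.
  rewrite -ltr_pdivlMl // mulrC -(sqr_sqrtr (ltW ra_gt0)).
  by rewrite ltr_pXn2r ?nnegrE ?sqrtr_ge0 ?ltW.
have [l_le0 | l_gt0] := lerP l 0.
  by apply: le_lt_trans l_le0 _; rewrite mulr_gt0 ?exprn_gt0.
rewrite -ltr_pdivrMl // mulrC -(sqr_sqrtr (ltW (divr_gt0 l_gt0 a_gt0))).
by rewrite ltr_pXn2r ?nnegrE ?sqrtr_ge0 ?ltW.
Qed.

Definition is_solution (R : realType) (K : R -> Prop) (a b x y z u v w : R) :=
  (K x /\ K y /\ K z /\ K u /\ K v /\ K w) /\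
  x ^+ 2 - a * y ^+ 2 + a * u ^+ 2 - b * v ^+ 2 + a * b * w ^+ 2 = 0 /\
  z ^+ 2 - 4 = a * u ^+ 2 /\
  (forall t, gen_field [:: x; y / u; z] t <-> K t) /\
  [/\ u != 0, x + (y * z) / (2 * u) > 2, y / u > 1, z > 2 &
      a * b * w ^+ 2 - b * v ^+ 2 > 4].

Section Construction.
Variables (R : realType) (K : R -> Prop) (a b t be ga : R).

Let tau := a * t ^+ 2.
Let z := 2 * (1 + tau) / (1 - tau).
Let u := 4 * t / (1 - tau).
Let c := b * be ^+ 2 - a * b * ga ^+ 2.

Hypotheses (hK : is_subfield K) (Ka : K a) (Kb : K b) (Kt : K t).
Hypotheses (Kbe : K be) (Kga : K ga) (Kgen : forall s, K s -> gen_field [:: t] s).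
Hypotheses (a_gt0 : 0 < a) (t_gt0 : 0 < t) (tau_lt1 : tau < 1).
Hypotheses (c_gt0 : 0 < c) (c_lt1 : c < 1).

Let tau_gt0 : 0 < tau. Proof. by rewrite mulr_gt0 ?exprn_gt0. Qed.

(* lra ignores section hypotheses, hence the explicit [move:] before it. *)
Ltac pos_side_conditions := repeat (apply/andP; split); rewrite gt_eqF //;
  move: a_gt0 t_gt0 tau_gt0 tau_lt1; rewrite /tau; lra.

Lemma u_gt0 : 0 < u. Proof. by rewrite divr_gt0 ?mulr_gt0 ?subr_gt0. Qed.

Lemma z_gt2 : 2 < z.
Proof. by rewrite ltr_pdivlMr ?subr_gt0 //; move: tau_gt0; lra. Qed.

Lemma z_sqr_sub4 : z ^+ 2 - 4 = a * u ^+ 2.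
Proof. by rewrite /z /u /tau; field; pos_side_conditions. Qed.

Lemma subfield_t_of_z (F : R -> Prop) : is_subfield F -> F z -> F (a * u) -> F t.
Proof.
move=> hF Fz Fau.
have Ftau : F tau.
  have -> : tau = (z - 2) / (z + 2) by rewrite /z; field; pos_side_conditions.
  by subfield_closure hF.
have Fat : F (a * t).
  have -> : a * t = a * u * (1 - tau) / 4 by rewrite /u; field; pos_side_conditions.
  by subfield_closure hF.
have -> : t = tau / (a * t) by rewrite /tau; field; pos_side_conditions.
by subfield_closure hF.
Qed.

Section RationalCoefficient.
Variable q : rat.

Let al : R := ratr q.
Let ep := 1 - (a * al ^+ 2 + c).
Let x := 2 * a * al * u / ep.
Let y := (2 - ep) * u / ep.
Let v := 2 * a * ga * u / ep.
Let w := 2 * be * u / ep.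

Hypotheses (al_gt0 : 0 < al) (ep_gt0 : 0 < ep) (ep_lt_half : ep < 2^-1).
Hypothesis ep_lt : ep < c * (a * u ^+ 2).

Let u_neq0 : u != 0. Proof. exact: lt0r_neq0 u_gt0. Qed.
Let ep_neq0 : ep != 0. Proof. exact: lt0r_neq0. Qed.

Lemma yu_ratio : y / u = (2 - ep) / ep.
Proof. by rewrite /y; field; rewrite ep_neq0 u_neq0. Qed.

Lemma quadric_eq : x ^+ 2 - a * y ^+ 2 + a * u ^+ 2 - b * v ^+ 2 + a * b * w ^+ 2 = 0.
Proof.
have -> : x ^+ 2 - a * y ^+ 2 + a * u ^+ 2 - b * v ^+ 2 + a * b * w ^+ 2 =
    a * u ^+ 2 / ep ^+ 2 * (4 * (a * al ^+ 2 + c) - (2 - ep) ^+ 2 + ep ^+ 2).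
  by rewrite /x /y /v /w /c; field.
have -> : a * al ^+ 2 + c = 1 - ep by rewrite /ep; ring.
ring.
Qed.

Lemma norm_part_eq : a * b * w ^+ 2 - b * v ^+ 2 = 4 * (c * (a * u ^+ 2)) / ep ^+ 2.
Proof. by rewrite /w /v /c; field. Qed.

Lemma subfield_t_of_xyz (F : R -> Prop) :
  is_subfield F -> F x -> F (y / u) -> F z -> F t.
Proof.
move=> hF Fx Fyu Fz; apply: subfield_t_of_z => //.
have Fep : F ep.
  have -> : ep = 2 / (y / u + 1) by rewrite yu_ratio; field; pos_side_conditions.
  by subfield_closure hF.
have -> : a * u = x * ep / (2 * al) by rewrite /x; field; pos_side_conditions.
by rewrite /al; subfield_closure hF.
Qed.

Lemma solution_spec : is_solution K a b x y z u v w.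
Proof.
have Kc : K c by rewrite /c; subfield_closure hK.
have Ku : K u by rewrite /u /tau; subfield_closure hK.
have Kep : K ep by rewrite /ep /al; subfield_closure hK.
have Kxyz : forall e, e \in [:: x; y / u; z] -> K e.
  by move=> e /[!inE] /or3P[] /eqP->; rewrite /x /y /z /tau /al; subfield_closure hK.
split.
  by rewrite /x /y /v /w /z /tau /al; do ![split]; subfield_closure hK.
split; first exact: quadric_eq.
split; first exact: z_sqr_sub4.
split.
  move=> s; split; first by apply; [exact: hK | exact: Kxyz].
  move/Kgen; apply: gen_field_trans => _ /[!inE] /eqP-> F hF Fxyz.
  by apply: (subfield_t_of_xyz hF); apply: Fxyz; rewrite !inE eqxx ?orbT.
have z2 := z_gt2; have u_gt := u_gt0; rewrite yu_ratio.
split => //.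
- have -> : y * z / (2 * u) = (2 - ep) * z / (2 * ep).
    by rewrite /y; field; rewrite ep_neq0 u_neq0.
  have x_gt0 : 0 < x by rewrite /x divr_gt0 // mulr_gt0 // mulr_gt0 // mulr_gt0.
  have : 2 < (2 - ep) * z / (2 * ep).
    by rewrite ltr_pdivlMr ?mulr_gt0 //; move: z2 ep_gt0 ep_lt_half; nra.
  lra.
- by rewrite ltr_pdivlMr //; move: ep_lt_half; lra.
- rewrite norm_part_eq ltr_pdivlMr ?exprn_gt0 //.
  by move: ep_gt0 ep_lt_half ep_lt; nra.
Qed.

End RationalCoefficient.

Lemma solution_exists : exists x y z u v w, is_solution K a b x y z u v w.
Proof.
have M_gt0 : 0 < c * (a * u ^+ 2).
  exact: mulr_gt0 c_gt0 (mulr_gt0 a_gt0 (exprn_gt0 2 u_gt0)).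
pose eta := Num.min (c * (a * u ^+ 2)) 2^-1.
have eta_gt0 : 0 < eta by rewrite lt_min M_gt0 invr_gt0 ltr0n.
have [q [al_gt0 /andP[lo hi]]] : exists q : rat, 0 < ratr q :> R /\
    1 - c - eta < a * ratr q ^+ 2 < 1 - c.
  by apply: rat_sqr_between; rewrite ?subr_gt0 ?gtrBl.
have ep_gt0 : 0 < 1 - (a * ratr q ^+ 2 + c) by move: hi; lra.
have ep_lt_eta : 1 - (a * ratr q ^+ 2 + c) < eta by move: lo; lra.
do 6!eexists; apply: (solution_spec al_gt0 ep_gt0); apply: (lt_le_trans ep_lt_eta).
  by rewrite ge_min lexx orbT.
by rewrite ge_min lexx.
Qed.
End Construction.

Theorem theorem3p1 (R : realType) (K : R -> Prop) (hK : real_number_field K)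
    (a b : R) (Ka : K a) (Kb : K b) (ha : 0 < a) (hb : b != 0) :
  exists x y z u v w : R,
    (K x /\ K y /\ K z /\ K u /\ K v /\ K w) /\
    x ^+ 2 - a * y ^+ 2 + a * u ^+ 2 - b * v ^+ 2 + a * b * w ^+ 2 = 0 /\
    z ^+ 2 - 4 = a * u ^+ 2 /\
    (forall t, gen_field [:: x; y / u; z] t <-> K t) /\
    [/\ u != 0, x + (y * z) / (2 * u) > 2, y / u > 1, z > 2 &
        a * b * w ^+ 2 - b * v ^+ 2 > 4].
Proof.
have hS := hK.1.
have [th Kth gen_th] := number_field_primitive_element hK.
have [t [Kt t_gt0 tau_lt1 gen_t]] := scaled_generator hS Kth ha.
have [be [ga [Kbe Kga c_gt0 c_lt1]]] := norm_form_between_0_1 hS Ka Kb ha hb.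
have Kgen s : K s -> gen_field [:: t] s.
  by move/gen_th; apply: gen_field_trans => _ /[!inE] /eqP->.
exact: solution_exists hS Ka Kb Kt Kbe Kga Kgen ha t_gt0 tau_lt1 c_gt0 c_lt1.
Qed.
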